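(* Let $P$ be a monotone irreducible positive recurrent stochastic kernel on $\mathbb{N}=\{1,2,\dots\}$ with stationary distribution $\pi$. Let $\overleftarrow{P}(x,y)=\pi(x)^{-1}P(y,x)\pi(y)$, $x,y\in\mathbb{N}$, be the time-reversed kernel, $\overleftarrow{X}=(\overleftarrow{X}_n)_{n\ge0}$ the Markov chain with kernel $\overleftarrow{P}$, and for $N\ge1$ let $\overleftarrow{\tau}_{(N)}=\inf\{n\ge0:\overleftarrow{X}_n\ge N\}$. Then $$\forall\, x,y\in\mathbb{N}:\quad \lim_{n,N\to\infty}\mathbb{P}_x\big(\overleftarrow{X}_n=y\,\big|\,\overleftarrow{\tau}_{(N)}>n\big)=\pi(y),$$ the limit being joint in $n$ and $N$.
   Context: A stochastic kernel $P$ on $\mathbb{N}$ is monotone if for every $y$ the map $x\mapsto\sum_{z\le y}P(x,z)$ is decreasing in $x$. $\pi$ is the (strictly positive) stationary probability of $P$. $\mathbb{P}_x$ denotes the law of the chain started at $x$. *)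

From HB Require Import structures.
From mathcomp Require Import all_boot all_order all_algebra.
From mathcomp Require Import all_classical all_reals all_analysis.
Set Implicit Arguments. Unset Strict Implicit. Unset Printing Implicit Defensive.
Import Order.TTheory GRing.Theory Num.Theory numFieldNormedType.Exports.
Local Open Scope classical_set_scope.
Local Open Scope ring_scope.

(* State space: the countable set nat (the paper's {1,2,...}, relabelled
   by k |-> k-1).  A kernel is a function P : nat -> nat -> R. *)

Definition stochastic (R : realType) (P : nat -> nat -> R) : Prop :=
  (forall x y, 0 <= P x y) /\
  (forall x, series (fun y => P x y) @ \oo --> (1:R)).

Definition monotone_kernel (R : realType) (P : nat -> nat -> R) : Prop :=
  forall y x1 x2, (x1 <= x2)%N ->
    \sum_(0 <= z < y.+1) P x2 z <= \sum_(0 <= z < y.+1) P x1 z.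

Definition irreducible (R : realType) (P : nat -> nat -> R) : Prop :=
  forall x y, exists s : seq nat,
    path (fun a b => 0 < P a b) x s /\ last x s = y.

(* Taboo probabilities: taboo P x k z = P_x(X_{k+1} = z, X_j <> x for 1<=j<=k). *)
Fixpoint taboo (R : realType) (P : nat -> nat -> R) (x : nat) (k : nat)
    (z : nat) : R :=
  match k with
  | 0 => P x z
  | k'.+1 => limn (series (fun w => if w == x then 0 else taboo P x k' w * P w z))
  end.

(* First return probabilities: P_x(T_x^+ = k+1), T_x^+ = inf{n >= 1 : X_n = x}. *)
Definition first_return (R : realType) (P : nat -> nat -> R) (x k : nat) : R :=
  taboo P x k x.

Definition positive_recurrent_state (R : realType) (P : nat -> nat -> R)
    (x : nat) : Prop :=
  (series (fun k => first_return P x k) @ \oo --> (1:R)) /\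
  cvgn (series (fun k => (k.+1)%:R * first_return P x k)).

Definition positive_recurrent (R : realType) (P : nat -> nat -> R) : Prop :=
  forall x, positive_recurrent_state P x.

Definition stationary_distribution (R : realType) (P : nat -> nat -> R)
    (pi : nat -> R) : Prop :=
  (forall x, 0 <= pi x) /\
  (series pi @ \oo --> (1:R)) /\
  (forall y, series (fun x => pi x * P x y) @ \oo --> pi y).

Definition reversed_kernel (R : realType) (P : nat -> nat -> R) (pi : nat -> R)
    : nat -> nat -> R :=
  fun x y => (pi x)^-1 * P y x * pi y.

(* killed Q N n x y = P_x(X_n = y, X_0 < N, ..., X_n < N) for the chain with
   kernel Q, i.e. P_x(X_n = y, tau_(N) > n), tau_(N) = inf{n >= 0 : X_n >= N}. *)
Fixpoint killed (R : realType) (Q : nat -> nat -> R) (N n x y : nat) : R :=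
  match n with
  | 0 => if (x < N)%N && (y == x) then 1 else 0
  | n'.+1 => if (y < N)%N then \sum_(0 <= z < N) killed Q N n' x z * Q z y else 0
  end.

Definition cond_killed (R : realType) (Q : nat -> nat -> R) (N n x y : nat) : R :=
  killed Q N n x y / \sum_(0 <= z < N) killed Q N n x z.

(* Reversing time turns the conditional law into
     P_x(<-X_n = y | <-tau_(N) > n) = pi(y) K_n(y,x) / sum_z pi(z) K_n(z,x),
   where K_n(z,a) is the probability that the forward chain goes from z to a in n
   steps without leaving [0, N).  Write K_n(y,x) = G_(x+1)(y) - G_x(y), with
   G_k(y) = P_y(X_n < k, tau_(N) > n), and D_k = sum_z pi(z) G_k(z).  By monotonicity
   G_k is nonincreasing, so G_k(0) >= D_k.  By recurrence of 0, the killed chain from a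
   fixed y reaches 0 in time with probability close to 1, and the strong Markov
   property gives G_k(y) >= (1 - d) G_k(0).  Since pi puts mass >= 1 - d on finitely
   many states, pi(y) G_k(y) = pi(y) D_k + O(d D_k).  Finally irreducibility gives a
   Harnack bound D_(x+1) <= C (D_(x+1) - D_x), so these errors are small compared with
   the normalisation D_(x+1) - D_x = sum_z pi(z) K_n(z,x). *)

From HB Require Import structures.
From mathcomp Require Import all_boot all_order all_algebra.
From mathcomp Require Import all_classical all_reals all_analysis.
From mathcomp Require Import ring lra.
Set Implicit Arguments.
Unset Strict Implicit.
Unset Printing Implicit Defensive.

Import Order.TTheory GRing.Theory Num.Theory numFieldNormedType.Exports.
Local Open Scope classical_set_scope.
Local Open Scope ring_scope.

Section RealSums.
Variable R : realType.
Implicit Types (u F : nat -> R) (l : R).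

Lemma series_le_lim {u l} : (forall k, 0 <= u k) -> series u @ \oo --> l ->
  forall n, \sum_(0 <= k < n) u k <= l.
Proof.
move=> u_ge0 ul n.
have nd : nondecreasing_seq (series u) :=
  @nondecreasing_series _ u predT 0 (fun k _ _ => u_ge0 k).
by have := nondecreasing_cvgn_le nd (cvgP _ ul) n; rewrite (cvg_lim _ ul).
Qed.

Lemma series_gt_lim_sub {u l eps} : series u @ \oo --> l -> 0 < eps ->
  exists n, l - eps < \sum_(0 <= k < n) u k.
Proof.
move=> /cvgrPdist_lt ul eps_gt0; have [n _ /(_ n (leqnn n))] := ul eps eps_gt0.
by rewrite /series /= => h; exists n; rewrite ltrBlDr -ltrBlDl (le_lt_trans (ler_norm _)).
Qed.

Lemma nonneg_series_bounded u b : (forall k, 0 <= u k) ->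
  (forall n, \sum_(0 <= k < n) u k <= b) ->
  cvgn (series u) /\ 0 <= limn (series u) <= b.
Proof.
move=> u_ge0 ub.
have nd : nondecreasing_seq (series u) :=
  @nondecreasing_series _ u predT 0 (fun k _ _ => u_ge0 k).
have cv : cvgn (series u).
  by apply: nondecreasing_is_cvgn nd _; exists b => _ [n _ <-]; exact: ub.
split => //; apply/andP; split; last by apply: limr_le => //; apply: nearW.
by apply: le_trans (nondecreasing_cvgn_le nd cv 0%N); rewrite /series /= big_geq.
Qed.

Lemma ler_sum_nat_term {F N i} : (forall j, (j < N)%N -> 0 <= F j) -> (i < N)%N ->
  F i <= \sum_(0 <= j < N) F j.
Proof.
move=> F_ge0 iN; rewrite (bigD1_seq i) ?mem_index_iota ?iota_uniq //= lerDl.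
rewrite big_seq_cond; apply: sumr_ge0 => j /andP[].
by rewrite mem_index_iota => /andP[_ /F_ge0].
Qed.

Lemma ler_sum_nat_widen F L N : (forall j, 0 <= F j) -> (L <= N)%N ->
  \sum_(0 <= j < L) F j <= \sum_(0 <= j < N) F j.
Proof. by move=> F_ge0 LN; rewrite (big_cat_nat (leq0n L) LN) /= lerDl sumr_ge0. Qed.

Lemma sum_nat_single F N i : (i < N)%N -> (forall j, j != i -> F j = 0) ->
  \sum_(0 <= j < N) F j = F i.
Proof.
by move=> iN F0; rewrite (bigD1_seq i) ?mem_index_iota ?iota_uniq //= big1 ?addr0.
Qed.

Lemma abel_summation (p phi : nat -> R) n :
  \sum_(0 <= w < n.+1) p w * phi w =
  \sum_(0 <= w < n) (\sum_(0 <= v < w.+1) p v) * (phi w - phi w.+1)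
  + (\sum_(0 <= v < n.+1) p v) * phi n.
Proof.
elim: n => [|n IH]; first by rewrite big_nat1 big_geq // big_nat1 add0r.
rewrite (big_nat_recr n.+1) //= IH.
rewrite (big_nat_recr n 0 (fun w => (\sum_(0 <= v < w.+1) p v) * (phi w - phi w.+1))) //=.
rewrite (big_nat_recr n.+1 0 p) //=.
ring.
Qed.

Lemma ler_sum_mul_nonincreasing (p1 p2 phi : nat -> R) n :
  (forall w, (w <= n)%N -> \sum_(0 <= v < w.+1) p2 v <= \sum_(0 <= v < w.+1) p1 v) ->
  (forall w, (w < n)%N -> phi w.+1 <= phi w) -> 0 <= phi n ->
  \sum_(0 <= w < n.+1) p2 w * phi w <= \sum_(0 <= w < n.+1) p1 w * phi w.
Proof.
move=> p12 phi_decr phin_ge0; rewrite !abel_summation; apply: lerD.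
  apply: ler_sum_nat => w /andP[_ wn]; apply: ler_wpM2r.
    by rewrite subr_ge0 phi_decr.
  by apply: p12; rewrite ltnW.
by apply: ler_wpM2r => //; apply: p12.
Qed.

Lemma series_termwise_approx {u l eps} : series u @ \oo --> l -> 0 < eps ->
  exists L, exists2 e, 0 < e & forall v, (forall k, (k < L)%N -> u k - e <= v k) ->
    l - eps <= \sum_(0 <= k < L) v k.
Proof.
move=> ul eps_gt0; have [|L HL] := series_gt_lim_sub ul (_ : 0 < eps / 2); first lra.
have L1_gt0 : 0 < L.+1%:R :> R by rewrite ltr0n.
exists L, (eps / 2 / L.+1%:R); first by rewrite divr_gt0 //; lra.
move=> v uv; have : \sum_(0 <= k < L) (u k - eps / 2 / L.+1%:R) <= \sum_(0 <= k < L) v k.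
  by apply: ler_sum_nat => k /andP[_ /uv].
have : eps / 2 / L.+1%:R *+ L <= eps / 2.
  rewrite -mulr_natr -mulrA ler_piMr //; first lra.
  by rewrite ler_pdivrMl // mulr1 ler_nat.
rewrite sumrB sumr_const_nat subn0; move: HL; rewrite /series /=.
set err := _ *+ L; lra.
Qed.

Lemma weighted_term_near_average (p g : nat -> R) (D d : R) L y :
  0 <= d <= 1 -> 0 <= D -> (forall z, 0 <= p z) -> p y <= 1 -> (y < L)%N ->
  1 - d <= \sum_(0 <= z < L) p z -> \sum_(0 <= z < L) p z * g z <= D ->
  (forall z, (z < L)%N -> (1 - d) * D <= g z) ->
  `|p y * g y - p y * D| <= 2 * d * D.
Proof.
move=> /andP[d_ge0 d_le1] D_ge0 p_ge0 py_le1 yL mass avg g_lb.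
have dev_ge0 z : (z < L)%N -> 0 <= p z * (g z - (1 - d) * D).
  by move=> zL; apply: mulr_ge0 => //; rewrite subr_ge0 g_lb.
have := ler_sum_nat_term dev_ge0 yL.
under [X in _ <= X]eq_bigr do rewrite mulrBr.
rewrite sumrB -mulr_suml => dev_y.
have : (1 - d) * D * (1 - d) <= (1 - d) * D * \sum_(0 <= z < L) p z.
  by apply: ler_wpM2l => //; rewrite mulr_ge0 // subr_ge0.
have : d * D * p y <= d * D by rewrite ler_piMr // mulr_ge0.
have := g_lb y yL; have := p_ge0 y.
by rewrite ler_norml; move: dev_y avg => *; apply/andP; split; nra.
Qed.

Lemma increment_ratio_near (g1 g0 D1 D0 C p dl : R) : 0 < D1 - D0 -> 0 <= D0 -> 0 <= dl ->
  D1 <= C * (D1 - D0) -> `|g1 - p * D1| <= dl * D1 -> `|g0 - p * D0| <= dl * D0 ->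
  `|(g1 - g0) / (D1 - D0) - p| <= 2 * dl * C.
Proof.
move=> E_gt0 D0_ge0 dl_ge0 D1C dev1 dev0.
have -> : (g1 - g0) / (D1 - D0) - p = ((g1 - p * D1) - (g0 - p * D0)) / (D1 - D0).
  by field; rewrite gt_eqF.
rewrite normrM normfV (gtr0_norm E_gt0) ler_pdivrMr //.
apply: le_trans (ler_normB _ _) _.
have : dl * D1 <= dl * (C * (D1 - D0)) by apply: ler_wpM2l.
move: dev1 dev0; nra.
Qed.

End RealSums.

Definition eventually2 (Q : nat -> nat -> Prop) : Prop :=
  exists M, forall n N, (M <= n)%N -> (M <= N)%N -> Q n N.

Lemma eventually2_ge K : eventually2 (fun n N => K <= n /\ K <= N)%N.
Proof. by exists K. Qed.

Lemma eventually2_mono {Q1 Q2 : nat -> nat -> Prop} :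
  (forall n N, Q1 n N -> Q2 n N) -> eventually2 Q1 -> eventually2 Q2.
Proof. by move=> Q12 [M HM]; exists M => n N Mn MN; apply/Q12/HM. Qed.

Lemma eventually2_and {Q1 Q2 : nat -> nat -> Prop} :
  eventually2 Q1 -> eventually2 Q2 -> eventually2 (fun n N => Q1 n N /\ Q2 n N).
Proof.
move=> [M1 H1] [M2 H2]; exists (maxn M1 M2) => n N.
by rewrite !geq_max => /andP[M1n M2n] /andP[M1N M2N]; split; [apply: H1|apply: H2].
Qed.

Lemma eventually2_forall_lt {Q : nat -> nat -> nat -> Prop} L :
  (forall w, (w < L)%N -> eventually2 (Q w)) ->
  eventually2 (fun n N => forall w, (w < L)%N -> Q w n N).
Proof.
elim: L => [|L IH] HQ; first by exists 0%N.
have := eventually2_and (IH (fun w wL => HQ w (ltnW wL))) (HQ L (ltnSn L)).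
apply: eventually2_mono => n N [HL HLn] w.
by rewrite ltnS leq_eqVlt => /orP[/eqP ->|/HL].
Qed.

Section Paths.
Variable e : rel nat.

Lemma path_last_edge s z y : path e z s -> last z s = y -> z != y -> exists w, e w y.
Proof.
elim: s z => [|w s IH] z /=; first by move=> _ ->; rewrite eqxx.
move=> /andP[ezw pw] lw _; case: (eqVneq w y) => [<-|wy]; first by exists z.
exact: IH pw lw wy.
Qed.

(* [t] is the part of the path after its last visit to 0, or all of it. *)
Lemma path_last_zero_free s z y : path e z s -> last z s = y ->
  exists2 z', (z' == z) || (z' == 0%N) &
    exists t, [/\ all (fun v => v != 0%N) t, path e z' t & last z' t = y].
Proof.
elim: s z => [|w s IH] z /=; first by move=> _ <-; exists z; rewrite ?eqxx //; exists [::].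
move=> /andP[ezw pw] lw; have [z' /orP[/eqP->|/eqP->] [t [t0 pt lt]]] := IH w pw lw.
- case: (eqVneq w 0%N) => [w0|w_neq0].
    by exists 0%N; rewrite ?orbT //; exists t; split; rewrite // -w0.
  by exists z; rewrite ?eqxx //; exists (w :: t); rewrite /= w_neq0 ezw.
- by exists 0%N; rewrite ?eqxx ?orbT //; exists t.
Qed.

End Paths.

Section KilledChain.
Variables (R : realType) (Q : nat -> nat -> R).
Hypothesis Q_ge0 : forall x y, 0 <= Q x y.

Lemma killed_last_step N n x y : killed Q N n.+1 x y =
  if (y < N)%N then \sum_(0 <= z < N) killed Q N n x z * Q z y else 0.
Proof. by []. Qed.

Lemma killed_first_step N n x y : killed Q N n.+1 x y =
  if (x < N)%N then \sum_(0 <= z < N) Q x z * killed Q N n z y else 0.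
Proof.
elim: n x y => [|n IH] x y.
  rewrite /=; case: (ltnP x N) => xN /=; last first.
    by case: ifP => // _; rewrite big1 // => z _; rewrite mul0r.
  case: ifP => yN; last first.
    rewrite big1_seq // => z /andP[_]; rewrite mem_index_iota => /andP[_ zN].
    by rewrite zN; case: eqP => [yz|_]; [rewrite yz zN in yN|rewrite mulr0].
  rewrite (@sum_nat_single _ _ _ x) ?eqxx ?mul1r; last 2 first.
  - exact: xN.
  - by move=> z /negbTE ->; rewrite mul0r.
  rewrite (@sum_nat_single _ _ _ y) ?yN ?eqxx ?mulr1 //.
  by move=> z zy; rewrite eq_sym (negbTE zy) andbF mulr0.
rewrite killed_last_step; under eq_bigr do rewrite IH.
case xN: (x < N)%N => /=; last by case: ifP => // _; rewrite big1 // => z _; rewrite mul0r.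
case yN: (y < N)%N => /=; last by rewrite big1 // => z _; rewrite mulr0.
under eq_bigr do rewrite mulr_suml.
rewrite exchange_big /=; apply: eq_bigr => z _.
by rewrite mulr_sumr; apply: eq_bigr => w _; rewrite mulrA.
Qed.

Lemma killed_ge0 N n x y : 0 <= killed Q N n x y.
Proof.
elim: n y => [|n IH] y /=; first by case: ifP.
by case: ifP => // _; apply: sumr_ge0 => z _; apply: mulr_ge0.
Qed.

Lemma killed_mul_le N n j z a x :
  killed Q N n z a * killed Q N j a x <= killed Q N (n + j) z x.
Proof.
elim: n z => [|n IH] z.
  rewrite /= add0n; case: ifP => [/andP[_ /eqP ->]|_]; first by rewrite mul1r.
  by rewrite mul0r killed_ge0.
rewrite addSn !killed_first_step; case: ifP => _; last by rewrite mul0r.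
rewrite mulr_suml; apply: ler_sum => w _; rewrite -mulrA.
exact: ler_wpM2l.
Qed.

Lemma killed_path_lb s a : path (fun u v => 0 < Q u v) a s ->
  exists2 c, 0 < c & exists B, forall N, (B <= N)%N ->
    c <= killed Q N (size s) a (last a s).
Proof.
elim: s a => [|w s IH] a.
  by move=> _; exists 1 => //; exists a.+1 => N aN /=; rewrite aN eqxx.
move=> /andP[Qaw /IH [c c_gt0 [B HB]]]; exists (Q a w * c); first exact: mulr_gt0.
exists (maxn B (maxn a w).+1) => N; rewrite geq_max gtn_max => /andP[BN /andP[aN wN]].
rewrite [size _]/= killed_first_step aN.
apply: le_trans (@ler_sum_nat_term _
  (fun v => Q a v * killed Q N (size s) v (last w s)) _ _ _ wN).
  by apply: ler_wpM2l; [exact: ltW|exact: HB].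
by move=> v _; apply: mulr_ge0 => //; apply: killed_ge0.
Qed.

End KilledChain.

Section Reversal.
Variables (R : realType) (P : nat -> nat -> R) (pi : nat -> R).
Hypothesis pi_gt0 : forall x, 0 < pi x.

Lemma killed_reversed N n x y :
  pi x * killed (reversed_kernel P pi) N n x y = pi y * killed P N n y x.
Proof.
elim: n y => [|n IH] y.
  by rewrite /=; case: (eqVneq y x) => [->|_]; rewrite ?andbF ?mulr0.
rewrite killed_last_step [in RHS]killed_first_step; case: ifP => _; last by rewrite !mulr0.
rewrite !mulr_sumr; apply: eq_bigr => z _.
rewrite /reversed_kernel mulrA IH.
by field; rewrite gt_eqF.
Qed.

Definition killed_mass N n a : R := \sum_(0 <= z < N) pi z * killed P N n z a.

Lemma cond_killed_reversed N n x y :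
  cond_killed (reversed_kernel P pi) N n x y = pi y * killed P N n y x / killed_mass N n x.
Proof.
have pix : pi x != 0 by rewrite gt_eqF.
have kr z : killed (reversed_kernel P pi) N n x z = pi z * killed P N n z x / pi x.
  by rewrite -killed_reversed mulrC mulKf.
rewrite /cond_killed kr; under eq_bigr do rewrite kr.
by rewrite -mulr_suml -/(killed_mass N n x) invf_div mulrA divfK.
Qed.

End Reversal.

Section MonotoneSubstochasticKernel.
Variables (R : realType) (P : nat -> nat -> R).
Hypothesis P_ge0 : forall x y, 0 <= P x y.
Hypothesis P_row_le1 : forall x N, \sum_(0 <= y < N) P x y <= 1.
Hypothesis P_mono : monotone_kernel P.

Lemma P_le1 x y : P x y <= 1.
Proof. by apply: le_trans (P_row_le1 x y.+1); apply: ler_sum_nat_term. Qed.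

Definition killed_cdf N n k z : R := \sum_(0 <= a < k) killed P N n z a.

Lemma killed_cdf_ge0 N n k z : 0 <= killed_cdf N n k z.
Proof. by apply: sumr_ge0 => a _; apply: killed_ge0. Qed.

Lemma killed_cdf0 N k z :
  killed_cdf N 0 k z = if (z < N)%N && (z < k)%N then 1 else 0.
Proof.
case zk: (z < k)%N; rewrite ?andbT ?andbF.
  rewrite /killed_cdf (@sum_nat_single _ _ _ z) //= ?eqxx ?andbT //.
  by move=> a /negbTE az; rewrite az andbF.
rewrite /killed_cdf big1_seq // => a /andP[_]; rewrite mem_index_iota => /andP[_ ak] /=.
by case: eqP => [az|]; [rewrite -az ak in zk|rewrite andbF].
Qed.

Lemma killed_cdf_first_step N n k z : killed_cdf N n.+1 k z =
  if (z < N)%N then \sum_(0 <= w < N) P z w * killed_cdf N n k w else 0.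
Proof.
rewrite /killed_cdf; under eq_bigr do rewrite killed_first_step.
case: ifP => _; last by rewrite big1.
by rewrite exchange_big; apply: eq_bigr => w _; rewrite mulr_sumr.
Qed.

Lemma killed_cdf_nonincreasing N n k z1 z2 : (z1 <= z2)%N ->
  killed_cdf N n k z2 <= killed_cdf N n k z1.
Proof.
elim: n z1 z2 => [|n IH] z1 z2 z12.
  rewrite !killed_cdf0; case: ifP => [/andP[z2N z2k]|_]; last by case: ifP.
  by rewrite (leq_ltn_trans z12 z2N) (leq_ltn_trans z12 z2k).
rewrite !killed_cdf_first_step; case: (ltnP z2 N) => z2N; last first.
  case: ifP => // _; apply: sumr_ge0 => w _.
  by apply: mulr_ge0 => //; apply: killed_cdf_ge0.
rewrite (leq_ltn_trans z12 z2N).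
case: N IH z2N => [//|N] IH _.
apply: ler_sum_mul_nonincreasing => [w _|w _|]; last exact: killed_cdf_ge0.
  exact: P_mono.
exact: IH.
Qed.

Lemma killed_cdf0_succ_le N n k : killed_cdf N n.+1 k 0 <= killed_cdf N n k 0.
Proof.
rewrite killed_cdf_first_step; case: ifP => _; last exact: killed_cdf_ge0.
apply: (@le_trans _ _ (\sum_(0 <= w < N) P 0%N w * killed_cdf N n k 0)).
  by apply: ler_sum => w _; apply: ler_wpM2l => //; apply: killed_cdf_nonincreasing.
by rewrite -mulr_suml ler_piMl ?killed_cdf_ge0.
Qed.

(* [hit0 N m z] is the probability that the chain started at [z] visits 0 within
   [m] steps without leaving [0, N) before. *)
Fixpoint hit0 N m z : R :=
  match m with
  | 0 => if z == 0%N then 1 else 0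
  | m'.+1 => if z == 0%N then 1 else
             if (z < N)%N then \sum_(0 <= w < N) P z w * hit0 N m' w else 0
  end.

Lemma hit0_ge0 N m z : 0 <= hit0 N m z.
Proof.
elim: m z => [|m IH] z /=; first by case: ifP.
by case: ifP => // _; case: ifP => // _; apply: sumr_ge0 => w _; apply: mulr_ge0.
Qed.

Lemma hit0_le1 N m z : hit0 N m z <= 1.
Proof.
elim: m z => [|m IH] z /=; first by case: ifP.
case: ifP => // _; case: ifP => // _; apply: le_trans (P_row_le1 z N).
by apply: ler_sum => w _; rewrite ler_piMr ?hit0_ge0.
Qed.

(* Strong Markov property at the first visit to 0, after which the killed cdf
   started from 0 can only have grown as the remaining time shrinks. *)
Lemma killed_cdf_ge_hit0 N n k y :
  killed_cdf N n k 0 * hit0 N n y <= killed_cdf N n k y.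
Proof.
elim: n y => [|n IH] y /=; case: (eqVneq y 0%N) => [->|_]; rewrite ?mulr1 //.
  by rewrite mulr0 killed_cdf_ge0.
case: ifP => yN; last by rewrite mulr0 killed_cdf_ge0.
rewrite [killed_cdf N n.+1 k y]killed_cdf_first_step yN mulr_sumr.
apply: ler_sum => w _; rewrite mulrCA; apply: ler_wpM2l => //.
apply: le_trans (IH w); apply: ler_wpM2r; first exact: hit0_ge0.
exact: killed_cdf0_succ_le.
Qed.

Definition return0 N m z : R := \sum_(0 <= w < N) P z w * hit0 N m w.

Lemma hit0S N m z : z != 0%N -> (z < N)%N -> hit0 N m.+1 z = return0 N m z.
Proof. by move=> /negbTE z0 zN; rewrite /= z0 zN. Qed.

Lemma return0_step N m z w : w != 0%N -> (w < N)%N ->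
  P z w * (1 - return0 N m w) <= 1 - return0 N m.+1 z.
Proof.
move=> w0 wN.
apply: (@le_trans _ _ (\sum_(0 <= v < N) P z v * (1 - hit0 N m.+1 v))).
  rewrite -hit0S //; apply: (@ler_sum_nat_term _ (fun v => P z v * (1 - hit0 N m.+1 v))) => //.
  by move=> v _; apply: mulr_ge0 => //; rewrite subr_ge0 hit0_le1.
under eq_bigr do rewrite mulrBr mulr1.
by rewrite sumrB lerB // P_row_le1.
Qed.

Lemma return0_path t z : all (fun v => v != 0%N) t -> path (fun a b => 0 < P a b) z t ->
  exists2 c, 0 < c & exists B, forall m N, (B <= N)%N ->
    c * (1 - return0 N m (last z t)) <= 1 - return0 N (m + size t) z.
Proof.
elim: t z => [|w t IH] z /=.
  by move=> _ _; exists 1 => //; exists 0%N => m N _; rewrite mul1r addn0.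
move=> /andP[w0 t0] /andP[Pzw pt]; have [c c_gt0 [B HB]] := IH w t0 pt.
exists (P z w * c); first exact: mulr_gt0.
exists (maxn B w.+1) => m N; rewrite geq_max => /andP[BN wN]; rewrite addnS.
apply: le_trans (@return0_step N (m + size t) z w w0 wN).
by rewrite -mulrA; apply: ler_wpM2l => //; apply: HB.
Qed.

(* [taboo_killed N mu k z]: the mass at time [k] and state [z] of the chain started
   from the measure [mu], killed when it leaves [0, N) and at its visits to 0 at
   times [0 .. k-1]. *)
Fixpoint taboo_killed N (mu : nat -> R) k z : R :=
  match k with
  | 0 => if (z < N)%N then mu z else 0
  | k'.+1 => if (z < N)%N then
      \sum_(0 <= w < N) (if w == 0%N then 0 else taboo_killed N mu k' w * P w z) else 0
  end.

Lemma taboo_killedS N mu k z : taboo_killed N mu k.+1 z =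
  if (z < N)%N then
    \sum_(0 <= w < N) (if w == 0%N then 0 else taboo_killed N mu k w * P w z) else 0.
Proof. by []. Qed.

Lemma taboo_killed_ge0 N mu k z : (forall w, 0 <= mu w) -> 0 <= taboo_killed N mu k z.
Proof.
move=> mu_ge0; elim: k z => [|k IH] z /=; first by case: ifP.
by case: ifP => // _; apply: sumr_ge0 => w _; case: ifP => // _; apply: mulr_ge0.
Qed.

Lemma taboo_killed_shift N mu k z : taboo_killed N mu k.+1 z =
  taboo_killed N (fun z => \sum_(0 <= w < N) (if w == 0%N then 0 else mu w * P w z)) k z.
Proof.
elim: k z => [|k IH] z.
  by rewrite /=; case: ifP => // _; apply: eq_big_nat => w /andP[_ ->].
by rewrite taboo_killedS [RHS]taboo_killedS; case: ifP => // _; under eq_bigr do rewrite IH.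
Qed.

Lemma sum_taboo_killed0 m N mu :
  \sum_(0 <= k < m.+1) taboo_killed N mu k 0%N = \sum_(0 <= w < N) mu w * hit0 N m w.
Proof.
case: N => [|N]; first by rewrite [RHS]big_geq // big1 // => -[].
elim: m mu => [|m IH] mu.
  rewrite big_nat1 /= (@sum_nat_single _ _ _ 0) ?mulr1 //.
  by move=> w /negbTE ->; rewrite mulr0.
rewrite big_nat_recl //; under eq_bigr do rewrite taboo_killed_shift.
rewrite IH /= [in RHS]big_nat_recl //= mulr1; congr (_ + _).
under eq_bigr do rewrite mulr_suml.
rewrite exchange_big /= big_nat_recl //= big1 ?add0r; last first.
  by move=> z _; rewrite mul0r.
apply: eq_big_nat => w /andP[_ wN]; rewrite ltnS wN mulr_sumr.
by apply: eq_bigr => z _; rewrite mulrA.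
Qed.

End MonotoneSubstochasticKernel.

Section MonotoneRecurrentChain.
Variables (R : realType) (P : nat -> nat -> R) (pi : nat -> R).
Hypothesis P_ge0 : forall x y, 0 <= P x y.
Hypothesis P_row_le1 : forall x N, \sum_(0 <= y < N) P x y <= 1.
Hypothesis P_mono : monotone_kernel P.
Hypothesis P_irr : irreducible P.
Hypothesis pi_gt0 : forall x, 0 < pi x.
Hypothesis pi_sum1 : series pi @ \oo --> (1 : R).
Hypothesis pi_subinvariant : forall y N, \sum_(0 <= x < N) pi x * P x y <= pi y.
Hypothesis recurrent0 : series (fun k => first_return P 0 k) @ \oo --> (1 : R).

Lemma taboo_series_bounded {x k} y : (forall w, 0 <= taboo P x k w <= pi w / pi x) ->
  cvgn (series (fun w => if w == x then 0 else taboo P x k w * P w y)) /\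
  0 <= limn (series (fun w => if w == x then 0 else taboo P x k w * P w y)) <= pi y / pi x.
Proof.
move=> taboo_le; apply: nonneg_series_bounded => [w|n].
  by case: ifP => // _; apply: mulr_ge0 => //; case/andP: (taboo_le w).
apply: (@le_trans _ _ (\sum_(0 <= w < n) pi w * P w y / pi x)).
  apply: ler_sum => w _; case: ifP => _.
    by apply: divr_ge0; [apply: mulr_ge0 => //; apply: ltW|apply: ltW].
  by rewrite mulrAC; apply: ler_wpM2r => //; case/andP: (taboo_le w).
by rewrite -mulr_suml ler_pM2r ?invr_gt0.
Qed.

Lemma taboo_bounds x k y : 0 <= taboo P x k y <= pi y / pi x.
Proof.
elim: k y => [|k IH] y; last exact: (taboo_series_bounded y IH).2.
rewrite /= P_ge0 ler_pdivlMr // mulrC; apply: le_trans (pi_subinvariant y x.+1).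
apply: (@ler_sum_nat_term _ (fun z => pi z * P z y)) => // z _.
by apply: mulr_ge0 => //; apply: ltW.
Qed.

Lemma taboo_series_cvg x k y :
  series (fun w => if w == x then 0 else taboo P x k w * P w y) @ \oo --> taboo P x k.+1 y.
Proof. exact: (taboo_series_bounded y (taboo_bounds x k)).1. Qed.

Lemma taboo_killed_approx k z eps : 0 < eps ->
  eventually2 (fun _ N => taboo P 0 k z - eps <= taboo_killed P N (P 0%N) k z).
Proof.
elim: k z eps => [|k IH] z eps eps_gt0.
  by exists z.+1 => _ N _ zN /=; rewrite zN lerBlDr lerDl ltW.
have [L [e e_gt0 approx]] := series_termwise_approx (@taboo_series_cvg 0 k z) eps_gt0.
have := eventually2_and (eventually2_forall_lt (L := L) (fun w _ => IH w e e_gt0))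
  (eventually2_ge (maxn L z.+1)).
apply: eventually2_mono => n N [IHN [_]]; rewrite geq_max => /andP[LN zN].
rewrite taboo_killedS zN; apply: le_trans (approx _ _) (ler_sum_nat_widen _ LN).
  move=> w wL; case: ifP => _; first by rewrite sub0r lerNl oppr0 ltW.
  have := IHN w wL; have := P_le1 P_ge0 P_row_le1 w z; have := P_ge0 w z.
  have := taboo_bounds 0 k w; case/andP => + _; nra.
move=> w; case: ifP => // _; apply: mulr_ge0 => //; exact: taboo_killed_ge0.
Qed.

Lemma return0_eventually_ge eps : 0 < eps ->
  eventually2 (fun m N => 1 - eps <= return0 P N m 0%N).
Proof.
move=> eps_gt0; have [K [e e_gt0 approx]] := series_termwise_approx recurrent0 eps_gt0.
have := eventually2_and
  (eventually2_forall_lt (L := K) (fun k _ => taboo_killed_approx k 0 e_gt0)) (eventually2_ge K).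
apply: eventually2_mono => m N [approxN [Km _]].
rewrite /return0 -sum_taboo_killed0; apply: le_trans (approx _ approxN) _.
apply: ler_sum_nat_widen (ltnW _) => [k|]; first exact: taboo_killed_ge0.
by rewrite ltnS.
Qed.

Lemma hit0_eventually_ge y eps : 0 < eps ->
  eventually2 (fun n N => 1 - eps <= hit0 P N n y).
Proof.
move=> eps_gt0; case: (eqVneq y 0%N) => [->|y_neq0].
  by exists 0%N => -[|n] N _ _ /=; rewrite lerBlDr lerDl ltW.
have [s [ps ls]] := P_irr 0 y.
have [z' /[!orbb]/eqP-> [t [t0 pt lt]]] := path_last_zero_free ps ls.
have [c c_gt0 [B HB]] := return0_path P_ge0 P_row_le1 t0 pt.
have [M HM] := return0_eventually_ge (mulr_gt0 c_gt0 eps_gt0).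
exists (maxn M.+1 (maxn B y.+1)) => -[|m] N; rewrite !geq_max // => /andP[Mm _].
move=> /andP[MN /andP[BN yN]].
have r0 := HM (m + size t) N (leq_trans Mm (leq_addr _ _)) (ltnW MN).
have := HB m N BN; rewrite lt hit0S // => ry.
have : c * (1 - return0 P N m y) <= c * eps by lra.
by rewrite ler_pM2l //; lra.
Qed.

Lemma P00_gt0 : 0 < P 0%N 0%N.
Proof.
have [s [ps ls]] := P_irr 1 0.
have [w Pw0] := path_last_edge ps ls isT.
by apply: lt_le_trans Pw0 _; have := P_mono 0 (leq0n w); rewrite !big_nat1.
Qed.

Lemma killed_diag_ge N n x : (x < N)%N -> P x x ^+ n <= killed P N n x x.
Proof.
move=> xN; elim: n => [|n IH]; first by rewrite /= xN eqxx expr0.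
rewrite killed_first_step xN exprS.
apply: le_trans (@ler_sum_nat_term _ (fun z => P x z * killed P N n z x) _ _ _ xN).
  exact: ler_wpM2l.
by move=> z _; apply: mulr_ge0 => //; apply: killed_ge0.
Qed.

Lemma pi_partial_le1 N : \sum_(0 <= x < N) pi x <= 1.
Proof. exact: series_le_lim (fun x => ltW (pi_gt0 x)) pi_sum1 N. Qed.

Lemma pi_le1 x : pi x <= 1.
Proof.
apply: le_trans (pi_partial_le1 x.+1).
by apply: ler_sum_nat_term => // z _; apply: ltW.
Qed.

Lemma killed_mass_ge0 N n a : 0 <= killed_mass P pi N n a.
Proof.
by apply: sumr_ge0 => z _; apply: mulr_ge0; [apply: ltW|apply: killed_ge0].
Qed.

Lemma killed_mass0_gt0 N n : (0 < N)%N -> 0 < killed_mass P pi N n 0.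
Proof.
move=> N_gt0; apply: lt_le_trans (ler_sum_nat_term _ N_gt0) => [|z _].
  apply: mulr_gt0 (pi_gt0 0) (lt_le_trans _ (killed_diag_ge n N_gt0)).
  exact: exprn_gt0 P00_gt0.
by apply: mulr_ge0; [apply: ltW|apply: killed_ge0].
Qed.

Lemma killed_mass_nonincreasing N a : nonincreasing_seq (fun n => killed_mass P pi N n a).
Proof.
apply/nonincreasing_seqP => n; rewrite /killed_mass.
under eq_big_nat => z /andP[_ zN] do rewrite killed_first_step zN mulr_sumr.
rewrite exchange_big /=; apply: ler_sum => w _.
under eq_bigr do rewrite mulrA.
rewrite -mulr_suml; apply: ler_wpM2r; [exact: killed_ge0|exact: pi_subinvariant].
Qed.

(* Harnack inequality, through a fixed positive-probability path from [a] to [x]. *)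
Lemma killed_mass_harnack a x : exists2 C, 0 < C &
  eventually2 (fun n N => killed_mass P pi N n a <= C * killed_mass P pi N n x).
Proof.
have [s [ps ls]] := P_irr a x.
have [c c_gt0 [B HB]] := killed_path_lb P_ge0 ps.
exists c^-1; first by rewrite invr_gt0.
exists (maxn (size s) B) => n N; rewrite !geq_max => /andP[sn _] /andP[_ BN].
rewrite -(ler_pM2l c_gt0) mulrA mulfV ?gt_eqF // mul1r.
apply: (@le_trans _ _ (c * killed_mass P pi N (n - size s) a)).
  by apply: ler_wpM2l; [apply: ltW|apply: killed_mass_nonincreasing; rewrite leq_subr].
rewrite /killed_mass mulr_sumr; apply: ler_sum => z _.
rewrite mulrCA; apply: ler_wpM2l; first exact: ltW.
have := killed_mul_le P_ge0 N (n - size s) (size s) z a x; rewrite subnK //.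
apply: le_trans; rewrite mulrC; apply: ler_wpM2l; first exact: killed_ge0.
by rewrite -ls; apply: HB.
Qed.

Lemma sum_killed_mass_le x K : exists2 C, 0 < C & eventually2 (fun n N =>
  \sum_(0 <= a < K) killed_mass P pi N n a <= C * killed_mass P pi N n x).
Proof.
elim: K => [|K [C1 C1_gt0 H1]].
  by exists 1 => //; exists 0%N => n N _ _; rewrite big_geq // mul1r killed_mass_ge0.
have [C2 C2_gt0 H2] := killed_mass_harnack K x.
exists (C1 + C2); first exact: addr_gt0.
apply: eventually2_mono (eventually2_and H1 H2) => n N [h1 h2].
by rewrite big_nat_recr //= mulrDl lerD.
Qed.

Lemma sum_killed_mass N n k : \sum_(0 <= a < k) killed_mass P pi N n a =
  \sum_(0 <= z < N) pi z * killed_cdf P N n k z.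
Proof.
by rewrite /killed_mass /killed_cdf exchange_big; apply: eq_bigr => z _; rewrite mulr_sumr.
Qed.

Lemma killed_cdf_average_le N n k :
  \sum_(0 <= z < N) pi z * killed_cdf P N n k z <= killed_cdf P N n k 0.
Proof.
apply: (@le_trans _ _ (\sum_(0 <= z < N) pi z * killed_cdf P N n k 0)).
  by apply: ler_sum => z _; apply: ler_wpM2l; [apply: ltW|exact: killed_cdf_nonincreasing].
by rewrite -mulr_suml ler_piMl ?killed_cdf_ge0 ?pi_partial_le1.
Qed.

Lemma killed_cdf_eventually_ge k L d : 0 < d -> eventually2 (fun n N =>
  forall y, (y < L)%N ->
    (1 - d) * \sum_(0 <= z < N) pi z * killed_cdf P N n k z <= killed_cdf P N n k y).
Proof.
move=> d_gt0; apply: eventually2_mono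
  (eventually2_forall_lt (L := L) (fun y _ => hit0_eventually_ge y d_gt0)) => n N hit y yL.
have D_ge0 : 0 <= \sum_(0 <= z < N) pi z * killed_cdf P N n k z.
  by apply: sumr_ge0 => z _; apply: mulr_ge0; [apply: ltW|apply: killed_cdf_ge0].
apply: le_trans (killed_cdf_ge_hit0 P_ge0 P_row_le1 P_mono N n k y).
apply: le_trans (_ : hit0 P N n y * \sum_(0 <= z < N) pi z * killed_cdf P N n k z <= _).
  exact: ler_wpM2r (hit y yL).
by rewrite mulrC; apply: ler_wpM2r; [exact: hit0_ge0|exact: killed_cdf_average_le].
Qed.

Lemma killed_cdf_near_average k y dl : 0 < dl -> eventually2 (fun n N =>
  `|pi y * killed_cdf P N n k y - pi y * \sum_(0 <= z < N) pi z * killed_cdf P N n k z|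
    <= dl * \sum_(0 <= z < N) pi z * killed_cdf P N n k z).
Proof.
move=> dl_gt0; have min_le_dl : Num.min dl 1 <= dl by rewrite ge_min lexx.
have min_le1 : Num.min dl 1 <= 1 by rewrite ge_min lexx orbT.
have min_gt0 : 0 < Num.min dl 1 by rewrite lt_min dl_gt0 ltr01.
set d := Num.min dl 1 / 2.
have d_gt0 : 0 < d by rewrite /d; lra.
have d_small : 0 <= d <= 1 /\ 2 * d <= dl by rewrite /d; split; [apply/andP; split|]; lra.
have [L0 mass0] := series_gt_lim_sub pi_sum1 d_gt0.
set L := maxn L0 y.+1.
apply: eventually2_mono (eventually2_and (killed_cdf_eventually_ge k L d_gt0)
  (eventually2_ge L)) => n N [G_lb [_ LN]].
set D := \sum_(0 <= z < N) _.
have D_ge0 : 0 <= D.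
  by apply: sumr_ge0 => z _; apply: mulr_ge0; [apply: ltW|apply: killed_cdf_ge0].
have mass : 1 - d <= \sum_(0 <= z < L) pi z.
  apply: le_trans (ltW mass0) (ler_sum_nat_widen _ (leq_maxl L0 y.+1)) => z.
  exact: ltW.
have avg : \sum_(0 <= z < L) pi z * killed_cdf P N n k z <= D.
  apply: ler_sum_nat_widen LN => z.
  by apply: mulr_ge0; [apply: ltW|apply: killed_cdf_ge0].
have yL : (y < L)%N by rewrite leq_max ltnSn orbT.
apply: le_trans (weighted_term_near_average d_small.1 D_ge0 _ (pi_le1 y) yL mass avg G_lb) _.
  by move=> z; apply: ltW.
by apply: ler_wpM2r => //; rewrite d_small.2.
Qed.

Lemma cond_killed_reversed_near x y eps : 0 < eps -> eventually2 (fun n N =>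
  `|cond_killed (reversed_kernel P pi) N n x y - pi y| < eps).
Proof.
move=> eps_gt0; have [C C_gt0 harnack] := sum_killed_mass_le x x.+1.
set dl := eps / 4 / C; have dl_gt0 : 0 < dl by rewrite !divr_gt0.
apply: eventually2_mono (eventually2_and harnack (eventually2_and
  (killed_cdf_near_average x.+1 y dl_gt0) (eventually2_and
  (killed_cdf_near_average x y dl_gt0) (eventually2_ge 1)))).
move=> n N [hC [dev1 [dev0 [_ N_gt0]]]].
have E_eq : killed_mass P pi N n x = \sum_(0 <= a < x.+1) killed_mass P pi N n a
    - \sum_(0 <= a < x) killed_mass P pi N n a.
  by rewrite big_nat_recr //= addrAC subrr add0r.
have Ex_gt0 : 0 < killed_mass P pi N n x.
  have : 0 < C * killed_mass P pi N n x.
    apply: lt_le_trans hC; apply: lt_le_trans (killed_mass0_gt0 n N_gt0) _.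
    by apply: ler_sum_nat_term => // a _; apply: killed_mass_ge0.
  by rewrite pmulr_rgt0.
have K_eq : killed P N n y x = killed_cdf P N n x.+1 y - killed_cdf P N n x y.
  by rewrite /killed_cdf big_nat_recr //= addrAC subrr add0r.
rewrite cond_killed_reversed // K_eq mulrBr E_eq !sum_killed_mass.
apply: le_lt_trans (increment_ratio_near (C := C) _ _ (ltW dl_gt0) _ dev1 dev0) _.
- by rewrite -!sum_killed_mass -E_eq.
- by apply: sumr_ge0 => z _; apply: mulr_ge0; [apply: ltW|apply: killed_cdf_ge0].
- by rewrite -!sum_killed_mass -E_eq.
- have -> : 2 * dl * C = eps / 2 by rewrite /dl; field; rewrite gt_eqF.
  lra.
Qed.

End MonotoneRecurrentChain.

Theorem proposition2 (R : realType) (P : nat -> nat -> R) (pi : nat -> R) :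
  stochastic P -> monotone_kernel P -> irreducible P -> positive_recurrent P ->
  stationary_distribution P pi -> (forall x, 0 < pi x) ->
  forall x y : nat, forall eps : R, 0 < eps ->
    exists M : nat, forall n N : nat, (M <= n)%N -> (M <= N)%N ->
      `| cond_killed (reversed_kernel P pi) N n x y - pi y | < eps.
Proof.
move=> [P_ge0 P_row1] P_mono P_irr P_rec [pi_ge0 [pi_sum1 pi_inv]] pi_gt0 x y eps eps_gt0.
have P_row_le1 x' N : \sum_(0 <= y' < N) P x' y' <= 1 := series_le_lim (P_ge0 x') (P_row1 x') N.
have pi_subinvariant y' N : \sum_(0 <= x' < N) pi x' * P x' y' <= pi y'.
  by apply: series_le_lim (pi_inv y') N => x'; apply: mulr_ge0.
exact: cond_killed_reversed_near P_row_le1 P_mono P_irr pi_gt0 pi_sum1 pi_subinvariant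
  (P_rec 0%N).1 x y eps eps_gt0.
Qed.
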